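(* Let $n\in\mathbb{N}$, $A_n=\{(i,j)\in\mathbb{Z}^2:0\le i,j\le 14n\}$ and $\tau:\mathbb{R}^2\to\mathbb{R}^2$, $\tau(x,y)=(x,(28n)^y)$. Let $(a_1,b_1),(a_2,b_2),(a_3,b_3)\in A_n$ with $a_1<a_2<a_3$ and either $b_1<b_2<b_3$ or $b_3<b_2<b_1$. Then the point $\tau(a_2,b_2)$ lies strictly below the line segment between $\tau(a_1,b_1)$ and $\tau(a_3,b_3)$ (i.e., below the point of that segment with $x$-coordinate $a_2$). *)

From HB Require Import structures.
From mathcomp Require Import all_boot all_order all_algebra.
From mathcomp Require Import reals exp.
Set Implicit Arguments. Unset Strict Implicit. Unset Printing Implicit Defensive.
Import Order.TTheory GRing.Theory Num.Theory.
Local Open Scope ring_scope.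

Definition in_A (n : nat) (p : int * int) : Prop :=
  (0 <= p.1 <= (14 * n)%:Z) /\ (0 <= p.2 <= (14 * n)%:Z).

Definition tau {R : realType} (n : nat) (p : R * R) : R * R :=
  (p.1, powR (28 * n)%:R p.2).

Definition line_y {R : realType} (P Q : R * R) (x : R) : R :=
  P.2 + (Q.2 - P.2) * (x - P.1) / (Q.1 - P.1).

Definition embZ {R : realType} (p : int * int) : R * R := (p.1%:~R, p.2%:~R).

(* Write c = 28n, D = a3 - a1 <= 14n and y_i = c^(b_i).  Consecutive heights
   differ by a factor at least c >= 2D.  Clearing the denominator of the
   chord, the claim is (y2 - y1) D < (y3 - y1) (a2 - a1): if the b_i
   increase, then y3 >= 2D y2 makes the right side exceed the left; if they
   decrease, then y1 >= 2D y2 makes the left side negative. *)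

From HB Require Import structures.
From mathcomp Require Import all_boot all_order all_algebra.
From mathcomp Require Import reals exp.
From mathcomp Require Import lra.
Import Order.TTheory GRing.Theory Num.Theory.
Set Implicit Arguments. Unset Strict Implicit.
Local Open Scope ring_scope.

Lemma intr_ltD1 (R : numDomainType) (u v : int) :
  u < v -> u%:~R + 1 <= v%:~R :> R.
Proof. by rewrite -lezD1 -(ler_int R) intrD. Qed.

Lemma mul_powR_le (R : realType) (c u v : R) :
  1 <= c -> u + 1 <= v -> c * c `^ u <= c `^ v.
Proof.
move=> c1 uv; apply: le_trans (ler_powR c1 uv).
by rewrite powRD ?powRr1 1?mulrC //; lra.
Qed.

Lemma line_y_gt (R : realType) (P Q : R * R) (x y : R) :
  P.1 < Q.1 -> (y - P.2) * (Q.1 - P.1) < (Q.2 - P.2) * (x - P.1) ->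
  y < line_y P Q x.
Proof. by move=> PQ; rewrite /line_y -ltrBlDl ltr_pdivlMr ?subr_gt0. Qed.

Lemma below_chord_increasing (R : realFieldType) (D a y1 y2 y3 : R) :
  1 <= D -> 1 <= a -> 0 < y1 -> 2 * D * y1 <= y2 -> 2 * D * y2 <= y3 ->
  (y2 - y1) * D < (y3 - y1) * a.
Proof.
move=> D1 a1 y1p y12 y23.
have y1D : y1 <= D * y1 by rewrite ler_peMl //; lra.
have y2D : y2 <= D * y2 by rewrite ler_peMl //; lra.
have y13a : y3 - y1 <= (y3 - y1) * a by rewrite ler_peMr //; lra.
lra.
Qed.

Lemma below_chord_decreasing (R : realFieldType) (D a y1 y2 y3 : R) :
  0 <= a -> a + 1 <= D -> 0 < y2 -> 0 <= y3 -> 2 * D * y2 <= y1 ->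
  (y2 - y1) * D < (y3 - y1) * a.
Proof.
move=> a0 aD y2p y3p y21.
have y2D : 0 < D * y2 by rewrite mulr_gt0 //; lra.
have y1Da : y1 <= y1 * (D - a) by rewrite ler_peMr //; lra.
have y3a : 0 <= y3 * a by rewrite mulr_ge0.
lra.
Qed.

Theorem lemma7 (R : realType) (n : nat) (p1 p2 p3 : int * int) :
  in_A n p1 -> in_A n p2 -> in_A n p3 ->
  p1.1 < p2.1 < p3.1 ->
  (p1.2 < p2.2 < p3.2) \/ (p3.2 < p2.2 < p1.2) ->
  (tau n (embZ p2 : R * R)).2 <
    line_y (tau n (embZ p1)) (tau n (embZ p3)) (tau n (embZ p2 : R * R)).1.
Proof.
case: p1 p2 p3 => [a1 b1] [a2 b2] [a3 b3] [/andP[a1_ge0 _] _] _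
  [/andP[_ a3_le] _] /= /andP[/(intr_ltD1 R) a12 /(intr_ltD1 R) a23] hb.
apply: line_y_gt => /=; first lra.
set c : R := (28 * n)%:R; set D : R := a3%:~R - a1%:~R.
have c_ge : 2 * D <= c.
  have : a3%:~R <= (14 * n)%:R :> R by rewrite -(ler_int R) in a3_le.
  have : 0 <= a1%:~R :> R by rewrite ler0z.
  by rewrite /c /D !natrM; lra.
have D_ge1 : 1 <= D by rewrite /D; lra.
have y_gt0 b : 0 < c `^ b%:~R by apply: powR_gt0; lra.
have c_ge1 : 1 <= c by lra.
have step u v : u < v -> 2 * D * c `^ u%:~R <= c `^ v%:~R.
  move=> /(intr_ltD1 R) uv; apply: le_trans (mul_powR_le c_ge1 uv).
  by rewrite ler_pM2r.
case: hb => /andP[/step grow_l /step grow_r].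
- by apply: (below_chord_increasing D_ge1 _ (y_gt0 b1) grow_l grow_r); lra.
- by apply: (below_chord_decreasing _ _ (y_gt0 b2) (ltW (y_gt0 b3)) grow_r);
    rewrite /D; lra.
Qed.
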